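(* Let $n=2p_{1}^{J_{1}}p_{2}^{J_{2}}\cdots p_{s}^{J_{s}}$, where $s\geq2$, $p_1,\dots,p_s$ are distinct odd primes, $J_i\ge1$, and for every $r\in\{1,\dots,s-1\}$ we have $\prod_{i=1}^{r}p_{i}^{J_{i}}<p_{r+1}$. Let $\mathcal{D}_{S_{1}},\mathcal{D}_{S_{2}}$ be subsets of $\mathcal{D}_{[n]}\setminus\{n\}$. If $\mathrm{Spec}(\mathrm{ICG}(n,\mathcal{D}_{S_{1}}))=\mathrm{Spec}(\mathrm{ICG}(n,\mathcal{D}_{S_{2}}))$, then $\mathcal{D}_{S_{1}}=\mathcal{D}_{S_{2}}$.
   Context: For an integer $n\ge1$, identify $\mathbb{Z}_n$ with $[n]=\{1,\dots,n\}$ ($n$ playing the role of $0$). For a positive divisor $d$ of $n$, $G_n(d)=\{j\in[n]:\gcd(j,n)=d\}$. $\mathcal{D}_{[n]}$ denotes the set of all positive divisors of $n$. For $\mathcal{D}\subseteq\mathcal{D}_{[n]}\setminus\{n\}$, $\mathrm{ICG}(n,\mathcal{D})$ denotes the circulant graph $\mathrm{Cay}(\mathbb{Z}_n,S)$ with connection set $S=\bigcup_{d\in\mathcal{D}}G_n(d)$ (vertex set $\mathbb{Z}_n$, $g\sim h$ iff $h-g\in S$); we write $\mathcal{D}=\mathcal{D}_S$. $\mathrm{Spec}$ denotes the multiset of eigenvalues of the adjacency matrix. *)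

From mathcomp Require Import all_boot all_order all_algebra all_field.
From mathcomp Require Import finmap.
Set Implicit Arguments. Unset Strict Implicit. Unset Printing Implicit Defensive.
Import GRing.Theory Num.Theory.
Local Open Scope ring_scope.

(* Vertices of Z_n are represented by 'I_n (residues 0..n-1; residue 0 plays
   the role of n).  For i j : 'I_n, j - i mod n is ((j + n - i) %% n); its gcd
   with n equals gcd(j - i, n) with the convention gcdn 0 n = n. *)
Definition diff_mod (n : nat) (i j : 'I_n) : nat := ((j + n - i) %% n)%N.

(* Adjacency matrix of ICG(n, D) = Cay(Z_n, S), S = union of G_n(d), d in D:
   g ~ h iff h - g in S iff gcd(h - g, n) in D. *)
Definition icg_adj (n : nat) (D : {fset nat}) : 'M[algC]_n :=
  \matrix_(i < n, j < n) (if gcdn (diff_mod i j) n \in D then 1 else 0).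

(* Spectrum as a multiset: multiplicity of each eigenvalue lambda in algC is its
   (algebraic) multiplicity as a root of the characteristic polynomial. *)
Definition spec_mult (n : nat) (A : 'M[algC]_n) (lambda : algC) : nat :=
  mup lambda (char_poly A).

Definition same_spec (n : nat) (A B : 'M[algC]_n) : Prop :=
  forall lambda : algC, spec_mult A lambda = spec_mult B lambda.

Definition proper_divisor_set (n : nat) (D : {fset nat}) : Prop :=
  forall d, d \in D -> (d %| n)%N /\ d != n.

From mathcomp Require Import all_boot all_order all_algebra all_field.
From mathcomp Require Import finmap cyclic zify.
Set Implicit Arguments. Unset Strict Implicit. Unset Printing Implicit Defensive.
Import Order.TTheory GRing.Theory Num.Theory.

(* The eigenvalues of ICG(n, D) are the sums lambda_k of w^(t k) over the t
   with gcd(t, n) in D, w a primitive n-th root of unity: the Fourier matrix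
   diagonalizes the adjacency matrix.  For n = 2m two of them are determined by
   the spectrum: lambda_0, which dominates every |lambda_k|, and lambda_m, because
   lambda_(n-k) = lambda_k makes every other value occur with even multiplicity.
   Now (lambda_0 + lambda_m)/2 and (lambda_0 - lambda_m)/2 count the even and
   the odd t with gcd(t, n) in D, and for m odd these counts are the sums of phi(m/d) over
   the divisors d of m with 2d in D, resp. d in D.  The growth condition makes
   phi superincreasing on the divisors of m (phi(x) exceeds the sum of phi over
   the smaller divisors), so each such sum determines its set of divisors. *)

Lemma leq_sum_sub m n (P Q : pred nat) (F : nat -> nat) : {subset P <= Q} ->
  \sum_(m <= i < n | P i) F i <= \sum_(m <= i < n | Q i) F i.
Proof.
move=> sPQ; rewrite big_mkcond [leqRHS]big_mkcond; apply: leq_sum => i _.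
by case: ifP => // /sPQ; rewrite unfold_in => ->.
Qed.

Lemma big_nat_dvd_mul (R : Type) (idx : R) (op : Monoid.law idx) q v (F : nat -> R) :
  0 < q -> \big[op/idx]_(0 <= y < v * q | q %| y) F y = \big[op/idx]_(0 <= u < v) F (u * q).
Proof.
move=> q_gt0; elim: v => [|v IHv]; first by rewrite mul0n !big_geq.
rewrite mulSn addnC (big_cat_nat _ (leq_addr _ _)) //= IHv big_nat_recr //=; congr (op _ _).
rewrite big_mkcond big_ltn /=; last lia.
rewrite dvdn_mull // big_nat_cond big1 ?Monoid.mulm1 // => y.
case/andP=> /andP[lt_vq_y lt_y_vqq] _; case: ifP => // /dvdnP[u def_y].
by move: lt_vq_y lt_y_vqq; rewrite def_y -mulSnr !ltn_mul2r q_gt0; lia.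
Qed.

Lemma superincreasing_sum_inj (S A B : pred nat) (w : nat -> nat) K :
    (forall x, x < K -> S x -> \sum_(0 <= y < x | S y) w y < w x) ->
    {subset A <= S} -> {subset B <= S} ->
    \sum_(0 <= x < K | A x) w x = \sum_(0 <= x < K | B x) w x ->
  forall x, x < K -> A x = B x.
Proof.
elim: K => [//|K IHK] w_sup sAS sBS.
have sum_recr (C : pred nat) : \sum_(0 <= x < K.+1 | C x) w x =
    \sum_(0 <= x < K | C x) w x + (if C K then w K else 0).
  by rewrite big_mkcond big_nat_recr //= -big_mkcond.
rewrite !sum_recr => eq_sum.
have w_supK := w_sup K (ltnSn K).
have leA := leq_sum_sub 0 K w sAS; have leB := leq_sum_sub 0 K w sBS.
have eqAB_K : A K = B K.
  move: eq_sum; case AK: (A K); case BK: (B K) => //=.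
    by move: (w_supK (sAS _ AK)) leB; lia.
  by move: (w_supK (sBS _ BK)) leA; lia.
move=> x; rewrite ltnS leq_eqVlt => /predU1P[-> //|lt_xK].
apply: IHK lt_xK => // [y lt_yK|]; first exact/w_sup/ltnW.
by move/eqP: eq_sum; rewrite eqAB_K eqn_add2r => /eqP.
Qed.

Lemma sum_nat_mirror h (F : nat -> nat) : 0 < h ->
    (forall k, 0 < k < h -> F (2 * h - k) = F k) ->
  \sum_(0 <= k < 2 * h) F k = F 0 + F h + 2 * \sum_(1 <= k < h) F k.
Proof.
move=> h_gt0 F_sym; rewrite big_ltn; last lia.
rewrite (big_cat_nat _ (n := h)) //=; last lia.
rewrite [X in _ + (_ + X)]big_ltn; last lia.
have -> : \sum_(h.+1 <= k < 2 * h) F k = \sum_(1 <= k < h) F k.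
  rewrite -[h.+1]add1n big_addn (_ : 2 * h - h = h); last lia.
  rewrite big_nat_rev /=.
  by apply: eq_big_nat => k /andP[k_gt0 lt_kh]; rewrite -[RHS]F_sym ?k_gt0 //; congr F; lia.
lia.
Qed.

Lemma eq_count_mirror_mid (T : eqType) h (f g : nat -> T) : 0 < h ->
    (forall k, 0 < k < h -> f (2 * h - k) = f k) ->
    (forall k, 0 < k < h -> g (2 * h - k) = g k) ->
    (forall v, \sum_(0 <= k < 2 * h) (f k == v) = \sum_(0 <= k < 2 * h) (g k == v)) ->
  f 0 = g 0 -> f h = g h.
Proof.
move=> h_gt0 f_sym g_sym eq_count eq0.
(* The values at k and 2h - k pair up, so a multiplicity is odd only through
   the values at 0 and h. *)
have := congr1 odd (eq_count (f h)).
rewrite !sum_nat_mirror // => [|k /g_sym->|k /f_sym->] //.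
by rewrite !mul2n !oddD !odd_double eq0 eqxx !addbF !oddb => /addbI/esym/eqP.
Qed.

Lemma eq_count_dominant (R : numDomainType) n (f g : nat -> R) : 0 < n ->
    (forall k, k < n -> (`|f k| <= f 0)%R) -> (forall k, k < n -> (`|g k| <= g 0)%R) ->
    (forall v, \sum_(0 <= k < n) (f k == v) = \sum_(0 <= k < n) (g k == v)) ->
  f 0 = g 0.
Proof.
move=> n_gt0.
suff le_dominant (f' g' : nat -> R) : (forall k, k < n -> (`|g' k| <= g' 0)%R) ->
    (forall v, \sum_(0 <= k < n) (f' k == v) = \sum_(0 <= k < n) (g' k == v)) ->
    (`|f' 0| <= f' 0)%R -> (f' 0 <= g' 0)%R.
  move=> f_dom g_dom eq_count; apply/le_anti.
  by rewrite !le_dominant ?f_dom ?g_dom // => v; rewrite eq_count.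
move=> g_dom eq_count f0_ge0.
have : 0 < \sum_(0 <= k < n) (g' k == f' 0) by rewrite -eq_count big_ltn // eqxx.
rewrite lt0n sum_nat_seq_neq0 => /hasP[k]; rewrite mem_index_iota => /andP[_ lt_kn].
move=> /andP[_]; rewrite eqb0 negbK => /eqP g_k; rewrite -g_k (le_trans _ (g_dom k lt_kn)) //.
by rewrite ger0_norm // g_k (le_trans _ f0_ge0).
Qed.

Lemma sum_totient_dvd_le N x : 0 < N -> \sum_(0 <= y < x | y %| N) totient y <= N.
Proof.
move=> N_gt0; rewrite -[leqRHS]sum_totient_dvd -(big_mkord (fun d => d %| N)).
rewrite (big_nat_widen _ _ (x + N.+1)) ?leq_addr //.
rewrite [leqRHS](big_nat_widen _ _ (x + N.+1)) ?leq_addl //.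
apply: leq_sum_sub => y; rewrite !unfold_in /= => /andP[y_dvd _].
by rewrite y_dvd ltnS dvdn_leq.
Qed.

Lemma dvdn_pexp_decomp M p K x : prime p -> coprime p M -> x %| M * p ^ K ->
  exists2 v, v %| M & exists2 b, b <= K & x = v * p ^ b.
Proof.
move=> p_pr cop_pM x_dvd.
have pK_gt0 : 0 < p ^ K by rewrite expn_gt0 prime_gt0.
have M_gt0 : 0 < M.
  by case: M cop_pM {x_dvd} => //; rewrite /coprime gcdn0 => /eqP p1; rewrite p1 in p_pr.
have MpK_gt0 : 0 < M * p ^ K by rewrite muln_gt0 M_gt0.
have [v cop_pv def_x] := pfactor_coprime p_pr (dvdn_gt0 MpK_gt0 x_dvd).
exists v.
  have : v %| M * p ^ K by apply: dvdn_trans x_dvd; rewrite def_x dvdn_mulr.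
  by rewrite Gauss_dvdl // coprimeXr // coprime_sym.
exists (logn p x) => //.
by have := dvdn_leq_log p MpK_gt0 x_dvd; rewrite lognM // (logn_coprime cop_pM) pfactorK.
Qed.

Lemma dvdn_mul_pexpS M p J y : prime p -> coprime p M ->
  y %| M * p ^ J.+1 -> ~~ (p ^ J.+1 %| y) -> y %| M * p ^ J.
Proof.
move=> p_pr cop_pM /(dvdn_pexp_decomp p_pr cop_pM)[u u_dvd [c le_cJ ->]] not_dvd.
rewrite dvdn_mul // dvdn_exp2l ?prime_gt0 // -ltnS ltn_neqAle le_cJ andbT.
by apply: contraNneq not_dvd => ->; rewrite dvdn_mull.
Qed.

Lemma sum_totient_dvdn_mulr M q v : 0 < q -> coprime M q ->
  \sum_(0 <= y < v * q | (y %| M * q) && (q %| y)) totient y =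
  totient q * \sum_(0 <= u < v | u %| M) totient u.
Proof.
move=> q_gt0 cop_Mq.
rewrite (eq_bigl (fun y => (q %| y) && (y %| M * q))) => [|y]; last exact: andbC.
rewrite big_mkcondr big_nat_dvd_mul // big_distrr /= [RHS]big_mkcond.
apply: eq_bigr => u _; rewrite dvdn_pmul2r //.
by case: ifP => // u_dvd; rewrite totient_coprime 1?mulnC // (coprime_dvdl u_dvd).
Qed.

Definition totient_superincreasing (m : nat) : Prop :=
  forall x, x %| m -> \sum_(0 <= y < x | y %| m) totient y < totient x.

Lemma totient_superincreasing_gt0 m : totient_superincreasing m -> 0 < m.
Proof. by case: m => // /(_ 0 (dvdnn 0)); rewrite big_geq. Qed.

Lemma totient_superincreasingMpexp M p J : prime p -> M.+1 < p ->
  totient_superincreasing M -> totient_superincreasing (M * p ^ J).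
Proof.
move=> p_pr ltMp tsM; have M_gt0 := totient_superincreasing_gt0 tsM.
have cop_pM : coprime p M by rewrite prime_coprime //; apply: contraL ltMp => /dvdn_leq; lia.
have pJ_gt0 k : 0 < p ^ k by rewrite expn_gt0 prime_gt0.
have Mp_gt0 k : 0 < M * p ^ k by rewrite muln_gt0 M_gt0 pJ_gt0.
elim: J => [|J IHJ]; first by rewrite muln1.
move=> x x_dvd; have [v v_dvd [b le_bJ def_x]] := dvdn_pexp_decomp p_pr cop_pM x_dvd.
have ltMpJ : M * p ^ J < p ^ J.+1 by rewrite expnS ltn_pmul2r //; lia.
case: (ltnP b J.+1) => [lt_bJ | le_Jb].
  have x_dvdJ : x %| M * p ^ J by rewrite def_x dvdn_mul ?dvdn_exp2l.
  rewrite big_nat_cond (eq_bigl (fun y => (0 <= y < x) && (y %| M * p ^ J))).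
    by rewrite -big_nat_cond IHJ.
  move=> y; apply: andb_id2l => /= lt_yx; apply/idP/idP => [y_dvd|].
    apply: (dvdn_mul_pexpS p_pr cop_pM y_dvd); apply: contraTN lt_yx.
    move/(dvdn_leq (dvdn_gt0 (Mp_gt0 _) y_dvd)).
    by have := dvdn_leq (Mp_gt0 _) x_dvdJ; lia.
  by move/dvdn_trans; apply; rewrite expnS mulnCA dvdn_mull.
have {le_Jb le_bJ} def_b : b = J.+1 by apply/eqP; rewrite eqn_leq le_bJ.
rewrite {b}def_b in def_x; set q := p ^ J.+1 in def_x *; subst x.
have cop_Mq : coprime M q by rewrite coprime_sym coprimeXl.
(* A divisor of M q below v q is either u q with u | M, u < v, or a divisor of
   M p^J; the totients of the latter sum to at most M p^J < totient q. *)
rewrite (bigID (fun y => q %| y)) /= sum_totient_dvdn_mulr ?pJ_gt0 //.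
have sum_not_mul_q :
    \sum_(0 <= y < v * q | (y %| M * q) && ~~ (q %| y)) totient y <= M * p ^ J.
  apply: leq_trans (sum_totient_dvd_le _ (Mp_gt0 J)); apply: leq_sum_sub => y.
  by rewrite !unfold_in => /andP[]; apply: dvdn_mul_pexpS.
have ltMpJ_q : M * p ^ J < totient q by rewrite totient_pfactor // ltn_pmul2r //; lia.
rewrite totient_coprime ?(coprime_dvdl v_dvd) //.
move: sum_not_mul_q ltMpJ_q (tsM v v_dvd).
set P := totient q; set T := \sum_(0 <= u < v | u %| M) totient u.
set S := \sum_(0 <= y < v * q | _) _; nia.
Qed.

Lemma totient_superincreasing1 : totient_superincreasing 1.
Proof. by move=> x; rewrite dvdn1 => /eqP->; rewrite big_mkcond big_nat1. Qed.

Lemma odd_totient_superincreasing_prod s (p J : nat -> nat) :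
    (forall i, i < s -> prime (p i) /\ odd (p i)) ->
    (forall r, 0 < r -> r < s -> \prod_(i < r) p i ^ J i < p r) ->
  odd (\prod_(i < s) p i ^ J i) /\ totient_superincreasing (\prod_(i < s) p i ^ J i).
Proof.
elim: s => [|s IHs] p_odd_pr p_grow.
  by rewrite big_ord0; split; last exact: totient_superincreasing1.
have [||odd_M tsM] := IHs => [i lt_is|r r_gt0 lt_rs|].
- exact/p_odd_pr/ltnW.
- exact/p_grow/ltnW.
have [p_pr odd_p] := p_odd_pr s (ltnSn s).
rewrite big_ord_recr /=; split; first by rewrite oddM oddX odd_p orbT odd_M.
apply: totient_superincreasingMpexp => //.
have lt_Mp : \prod_(i < s) p i ^ J i < p s.
  case: s {IHs p_odd_pr odd_M tsM} p_grow p_pr odd_p => [|s] p_grow p_pr _.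
    by rewrite big_ord0 prime_gt1.
  exact: p_grow.
rewrite ltn_neqAle lt_Mp andbT; apply: contraTneq odd_p => <-.
by rewrite /= odd_M.
Qed.

Lemma divn_divK n d : 0 < n -> d %| n -> n %/ (n %/ d) = d.
Proof. by move=> n_gt0 d_dvd; rewrite divnA // mulKn. Qed.

Lemma gcdnBl n t : t <= n -> gcdn (n - t) n = gcdn t n.
Proof. by move=> le_tn; rewrite -{2 3}(subnKC le_tn) gcdnDr gcdnDl gcdnC. Qed.

Lemma count_gcdn_eq n e : 0 < n -> e %| n ->
  \sum_(0 <= t < n) (gcdn t n == n %/ e) = totient e.
Proof.
move=> n_gt0 e_dvd; set d := n %/ e.
have e_gt0 := dvdn_gt0 n_gt0 e_dvd.
have d_gt0 : 0 < d by rewrite divn_gt0 // dvdn_leq.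
have def_n : n = e * d by rewrite /d mulnC divnK.
rewrite totient_count_coprime [in X in \sum_(0 <= t < X) _]def_n.
rewrite (eq_bigr (fun t => if d %| t then (gcdn t n == d) : nat else 0)) => [|t _]; last first.
  by case: ifP => // d_ndvd_t; case: eqP => // gcd_eq; rewrite -gcd_eq dvdn_gcdl in d_ndvd_t.
rewrite -big_mkcond big_nat_dvd_mul //; apply: eq_bigr => u _.
by rewrite def_n -muln_gcdl -{2}[d]mul1n eqn_pmul2r // gcdnC.
Qed.

Lemma sum_gcdn n (F : nat -> nat) : 0 < n ->
  \sum_(0 <= t < n) F (gcdn t n) = \sum_(0 <= e < n.+1 | e %| n) F (n %/ e) * totient e.
Proof.
move=> n_gt0.
have pick_gcd t : F (gcdn t n) = \sum_(0 <= e < n.+1 | e %| n) (gcdn t n == n %/ e) * F (n %/ e).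
  have g_dvd := dvdn_gcdr t n.
  rewrite (eq_bigr (fun e => if e == n %/ gcdn t n then F (gcdn t n) else 0)) => [|e e_dvd].
    by rewrite -big_mkcondr big_nat1_cond_eq ltnS leq_div dvdn_div.
  have -> : (gcdn t n == n %/ e) = (e == n %/ gcdn t n).
    by apply/eqP/eqP => ->; rewrite divn_divK.
  by have [->|_] := eqVneq e (n %/ gcdn t n); rewrite ?divn_divK ?mul1n.
rewrite (eq_bigr _ (fun t _ => pick_gcd t)) exchange_big_nat /=.
by apply: eq_bigr => e e_dvd; rewrite -big_distrl /= count_gcdn_eq // mulnC.
Qed.

Lemma sum_dvdn_double m (G : nat -> nat) : odd m ->
  \sum_(0 <= e < (2 * m).+1 | e %| 2 * m) G e =
  \sum_(0 <= e < m.+1 | e %| m) (G e + G (2 * e)).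
Proof.
move=> odd_m; have m_gt0 : 0 < m by case: m odd_m.
rewrite big_split /= (bigID odd) /=; congr (_ + _).
  rewrite [RHS](big_nat_widen _ _ (2 * m).+1) ?ltnS ?leq_pmull //.
  apply: eq_bigl => e; case: (boolP (odd e)) => [odd_e|even_e]; rewrite ?andbT ?andbF.
    rewrite Gauss_dvdr ?coprimen2 //; apply/idP/andP => [e_dvd|[]//].
    by rewrite ltnS dvdn_leq.
  by apply/esym/negbTE; apply: contra even_e => /andP[/dvdn_odd->].
rewrite (big_nat_widen _ _ (m.+1 * 2)); last lia.
rewrite (eq_bigl (fun e => (2 %| e) && ((e %| 2 * m) && (e < (2 * m).+1)))) => [|e]; last first.
  by rewrite dvdn2 -andbA andbCA.
rewrite (@big_mkcondr _ _ _ _ _ (fun e => 2 %| e)) big_nat_dvd_mul //.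
rewrite [RHS]big_mkcond; apply: eq_bigr => u _.
rewrite [u * 2]mulnC dvdn_pmul2l // ltnS leq_pmul2l //.
by case: (boolP (u %| m)) => //= /(dvdn_leq m_gt0)->.
Qed.

Definition gcd_parity_count n (D : {fset nat}) (b : bool) : nat :=
  \sum_(0 <= t < n) ((gcdn t n \in D) && (odd t == b)).

Lemma odd_gcdn_double m t : odd (gcdn t (2 * m)) = odd t.
Proof. by apply: negb_inj; rewrite -!dvdn2 dvdn_gcd dvdn_mulr // andbT. Qed.

Lemma gcd_parity_count_double m (D : {fset nat}) (b : bool) : odd m ->
  gcd_parity_count (2 * m) D b =
  \sum_(0 <= e < m.+1 | (e %| m) && ((if b then m %/ e else 2 * (m %/ e)) \in D)) totient e.
Proof.
move=> odd_m; have m_gt0 : 0 < m by case: m odd_m.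
rewrite /gcd_parity_count.
rewrite (eq_bigr (fun t => ((gcdn t (2 * m) \in D) && (odd (gcdn t (2 * m)) == b)) : nat));
  last by move=> t _; rewrite odd_gcdn_double.
rewrite (sum_gcdn (fun g => (g \in D) && (odd g == b))) ?muln_gt0 // sum_dvdn_double //.
rewrite [RHS]big_mkcondr; apply: eq_bigr => e e_dvd; have odd_e := dvdn_odd e_dvd odd_m.
have odd_me : odd (m %/ e) := dvdn_odd (dvdn_div e_dvd) odd_m.
rewrite -muln_divA // divnMl // totient_coprime ?coprime2n // mul1n oddM odd_me.
by case: b => /=; rewrite ?andbF ?andbT /=; case: ifP => _; rewrite /= ?mul1n ?mul0n ?addn0.
Qed.

Definition ord_addmod n (i t : 'I_n) : 'I_n :=
  Ordinal (ltn_pmod (i + t) (leq_ltn_trans (leq0n i) (ltn_ord i))).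

Lemma diff_mod_addmod n (i t : 'I_n) : diff_mod i (ord_addmod i t) = t.
Proof.
rewrite /diff_mod /= -[RHS](modn_small (ltn_ord t)); apply/eqP.
by rewrite -(eqn_modDl i) subnKC ?modnDr ?modn_mod // ltnW // ltn_addl.
Qed.

Lemma ord_addmod_inj n (i : 'I_n) : injective (ord_addmod i).
Proof. by move=> t1 t2 /(congr1 (diff_mod i)); rewrite !diff_mod_addmod => /val_inj. Qed.

Definition ord_oppmod n (t : 'I_n) : 'I_n :=
  Ordinal (ltn_pmod (n - t) (leq_ltn_trans (leq0n t) (ltn_ord t))).

Lemma ord_oppmodK n : involutive (@ord_oppmod n).
Proof.
move=> t; apply: val_inj => /=; have lt_tn := ltn_ord t.
have [->|t_gt0] := posnP t; first by rewrite subn0 modnn subn0 modnn.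
have lt_ntn : n - t < n by lia.
by rewrite (modn_small lt_ntn) subKn ?modn_small // ltnW.
Qed.

Section Spectrum.
Local Open Scope ring_scope.

Definition icg_eigenvalue n (D : {fset nat}) (w : algC) (k : nat) : algC :=
  \sum_(t < n) (gcdn t n \in D)%:R * w ^+ (t * k).

Definition fourier_mx n (w : algC) : 'M[algC]_n := \matrix_(i, k) w ^+ (i * k).

Variables (n : nat) (w : algC).
Hypothesis w_prim : n.-primitive_root w.

Lemma icg_adj_fourier (D : {fset nat}) :
  icg_adj n D *m fourier_mx n w =
  fourier_mx n w *m diag_mx (\row_k icg_eigenvalue n D w k).
Proof.
apply/matrixP => i k; rewrite mul_mx_diag !mxE (reindex_inj (@ord_addmod_inj n i)) /=.
rewrite /icg_eigenvalue big_distrr /=; apply: eq_bigr => t _.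
rewrite !mxE diff_mod_addmod exprM prim_expr_mod // -exprM mulnDl exprD.
by case: ifP => _; rewrite ?mul0r ?mulr0 // !mul1r.
Qed.

Lemma det_fourier_mx_neq0 : \det (fourier_mx n w) != 0.
Proof.
have -> : fourier_mx n w = Vandermonde n (\row_(k < n) w ^+ k).
  by apply/matrixP => i k; rewrite !mxE -exprM mulnC.
rewrite det_Vandermonde; apply/prodf_neq0 => i _; apply/prodf_neq0 => j lt_ij.
rewrite !mxE subr_eq0 (eq_prim_root_expr w_prim) !modn_small //.
by apply: contraTneq lt_ij => /val_inj->; rewrite ltnn.
Qed.

Lemma char_poly_icg_adj (D : {fset nat}) :
  char_poly (icg_adj n D) = \prod_(k < n) ('X - (icg_eigenvalue n D w k)%:P).
Proof.
pose F := fourier_mx n w; pose L := diag_mx (\row_(k < n) icg_eigenvalue n D w k).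
have conj_F : char_poly_mx (icg_adj n D) *m map_mx polyC F = map_mx polyC F *m char_poly_mx L.
  by rewrite /char_poly_mx mulmxBl mulmxBr -scalar_mxC -!map_mxM icg_adj_fourier.
have detF : \det (map_mx polyC F) != 0 by rewrite det_map_mx polyC_eq0 det_fourier_mx_neq0.
move/(congr1 determinant): conj_F; rewrite !det_mulmx [RHS]mulrC => /(mulIf detF).
rewrite -/(char_poly _) -/(char_poly L) => ->.
by rewrite char_poly_trig ?diag_mx_is_trig //; apply: eq_bigr => k _; rewrite !mxE eqxx.
Qed.

Lemma spec_mult_icg_adj (D : {fset nat}) v :
  spec_mult (icg_adj n D) v = (\sum_(0 <= k < n) (icg_eigenvalue n D w k == v))%N.
Proof.
rewrite /spec_mult char_poly_icg_adj.
rewrite -(big_mkord xpredT (fun k => 'X - (icg_eigenvalue n D w k)%:P)).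
rewrite -(big_map (icg_eigenvalue n D w) xpredT (fun x => 'X - x%:P)) mu_prod_XsubC.
by rewrite count_map -sum1_count big_mkcond /=; apply: eq_bigr => k _; case: ifP.
Qed.

Lemma icg_eigenvalueN (D : {fset nat}) k : (k <= n)%N ->
  icg_eigenvalue n D w (n - k) = icg_eigenvalue n D w k.
Proof.
move=> le_kn; rewrite /icg_eigenvalue (reindex_inj (inv_inj (@ord_oppmodK n))) /=.
apply: eq_bigr => t _; have le_tn := ltnW (ltn_ord t).
congr (_ * _); first by rewrite gcdn_modl gcdnBl.
rewrite exprM; apply/eqP; rewrite -exprM (eq_prim_root_expr w_prim) modnMml; apply/eqP.
rewrite -[LHS](modnMDl (t + k)).
have -> : ((t + k) * n + (n - t) * (n - k) = n * n + t * k)%N by nia.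
by rewrite modnMDl.
Qed.

Lemma icg_eigenvalue0 (D : {fset nat}) :
  icg_eigenvalue n D w 0 = (gcd_parity_count n D false + gcd_parity_count n D true)%:R.
Proof.
rewrite -big_split /= big_mkord natr_sum; apply: eq_bigr => t _.
by rewrite muln0 expr0 mulr1; case: (_ \in D); case: odd.
Qed.

Lemma norm_icg_eigenvalue_le (D : {fset nat}) k :
  `|icg_eigenvalue n D w k| <= icg_eigenvalue n D w 0.
Proof.
have norm_w : `|w| = 1.
  by apply/eqP; rewrite -(pexpr_eq1 (prim_order_gt0 w_prim)) // -normrX prim_expr_order ?normr1.
apply: le_trans (ler_norm_sum _ _ _) _; apply: ler_sum => t _.
by rewrite normrM normrX norm_w expr1n mulr1 muln0 expr0 mulr1 normr_nat.
Qed.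

Lemma icg_eigenvalue_half (D : {fset nat}) h : n = (2 * h)%N -> (0 < h)%N ->
  icg_eigenvalue n D w h = (gcd_parity_count n D false)%:R - (gcd_parity_count n D true)%:R.
Proof.
move=> def_n h_gt0; have w_h : w ^+ h = -1.
  have /eqP : (w ^+ h) ^+ 2 = 1 by rewrite -exprM mulnC -def_n prim_expr_order.
  rewrite sqrf_eq1 -[X in _ == X](expr0 w) (eq_prim_root_expr w_prim) mod0n modn_small; last lia.
  by rewrite eqn0Ngt h_gt0 => /eqP.
rewrite /gcd_parity_count !big_mkord !natr_sum -sumrB; apply: eq_bigr => t _.
rewrite mulnC exprM w_h -signr_odd.
by case: (gcdn t n \in D); case: (odd t); rewrite /= ?mul1r ?mul0r ?expr1 ?subr0 ?sub0r ?subrr.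
Qed.

End Spectrum.

Lemma same_spec_gcd_parity_count h (D1 D2 : {fset nat}) : 0 < h ->
    same_spec (icg_adj (2 * h) D1) (icg_adj (2 * h) D2) ->
  gcd_parity_count (2 * h) D1 =1 gcd_parity_count (2 * h) D2.
Proof.
move=> h_gt0 cospec; have n_gt0 : 0 < 2 * h by rewrite muln_gt0.
have [w w_prim] := C_prim_root_exists n_gt0.
have eq_count v : \sum_(0 <= k < 2 * h) (icg_eigenvalue (2 * h) D1 w k == v) =
    \sum_(0 <= k < 2 * h) (icg_eigenvalue (2 * h) D2 w k == v).
  by rewrite -!(spec_mult_icg_adj w_prim); apply: cospec.
have mirror D k : 0 < k < h ->
    icg_eigenvalue (2 * h) D w (2 * h - k) = icg_eigenvalue (2 * h) D w k.
  by move=> /andP[_ lt_kh]; rewrite icg_eigenvalueN //; lia.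
have eq0 := eq_count_dominant n_gt0 (fun k _ => norm_icg_eigenvalue_le w_prim D1 k)
  (fun k _ => norm_icg_eigenvalue_le w_prim D2 k) eq_count.
have := eq_count_mirror_mid h_gt0 (mirror D1) (mirror D2) eq_count eq0.
move: eq0; rewrite !icg_eigenvalue0 !(icg_eigenvalue_half w_prim) //.
move/eqP; rewrite eqr_nat => /eqP eq0 /eqP.
rewrite subr_eq eq_sym addrAC subr_eq -!natrD eqr_nat => /eqP eqh.
by case; lia.
Qed.

Lemma cospectral_icg_double m (D1 D2 : {fset nat}) : odd m -> totient_superincreasing m ->
    same_spec (icg_adj (2 * m) D1) (icg_adj (2 * m) D2) ->
  forall d, d %| m -> (d \in D1) = (d \in D2) /\ (2 * d \in D1) = (2 * d \in D2).
Proof.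
move=> odd_m ts_m cospec; have m_gt0 := totient_superincreasing_gt0 ts_m.
have eq_codiv (b : bool) e : e %| m ->
    ((if b then m %/ e else 2 * (m %/ e)) \in D1) = ((if b then m %/ e else 2 * (m %/ e)) \in D2).
  move=> e_dvd; have sub_dvd (D : {fset nat}) :
      {subset [pred x | (x %| m) && ((if b then m %/ x else 2 * (m %/ x)) \in D)] <= dvdn^~ m}.
    by move=> x /andP[].
  have := same_spec_gcd_parity_count m_gt0 cospec b.
  rewrite !gcd_parity_count_double //.
  move/(superincreasing_sum_inj (fun x _ => ts_m x) (sub_dvd D1) (sub_dvd D2))/(_ e).
  by rewrite /= e_dvd ltnS dvdn_leq // => /(_ isT).
move=> d d_dvd; rewrite -(divn_divK m_gt0 d_dvd).
by split; [apply: (eq_codiv true) | apply: (eq_codiv false)]; apply: dvdn_div.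
Qed.

Lemma eq_fset_divisors_double m (D1 D2 : {fset nat}) : odd m ->
    proper_divisor_set (2 * m) D1 -> proper_divisor_set (2 * m) D2 ->
    (forall d, d %| m -> (d \in D1) = (d \in D2) /\ (2 * d \in D1) = (2 * d \in D2)) ->
  D1 = D2.
Proof.
move=> odd_m sD1 sD2 eqD.
have sub (A B : {fset nat}) : proper_divisor_set (2 * m) A ->
    (forall d, d %| m -> (d \in A) = (d \in B) /\ (2 * d \in A) = (2 * d \in B)) ->
    {subset A <= B}.
  move=> sA eqAB d dA; have [d_dvd _] := sA d dA.
  have [odd_d | even_d] := boolP (odd d).
    have cop_d2 : coprime d 2 by rewrite coprimen2.
    by rewrite -(eqAB d _).1 // -(Gauss_dvdr _ cop_d2).
  have def_d : d = 2 * (d %/ 2) by rewrite mulnC divnK // dvdn2.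
  by rewrite def_d -(eqAB _ _).2 -?def_d // -(dvdn_pmul2l (isT : 0 < 2)) -def_d.
by apply/fsetP => d; apply/idP/idP; apply: sub => // d' /eqD[-> ->].
Qed.

Theorem theorem1p4 (n s : nat) (p J : nat -> nat) (D1 D2 : {fset nat}) :
  (2 <= s)%N ->
  (forall i, (i < s)%N -> prime (p i) /\ odd (p i) /\ (1 <= J i)%N) ->
  (forall i j, (i < s)%N -> (j < s)%N -> p i = p j -> i = j) ->
  (forall r, (1 <= r)%N -> (r < s)%N -> (\prod_(i < r) p i ^ J i < p r)%N) ->
  n = (2 * \prod_(i < s) p i ^ J i)%N ->
  proper_divisor_set n D1 -> proper_divisor_set n D2 ->
  same_spec (icg_adj n D1) (icg_adj n D2) ->
  D1 = D2.
Proof.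
move=> _ p_odd_pr _ p_grow def_n sD1 sD2 cospec.
have p_odd i : i < s -> prime (p i) /\ odd (p i) by case/p_odd_pr => ? [].
have [odd_m ts_m] := odd_totient_superincreasing_prod p_odd p_grow.
rewrite def_n in sD1 sD2 cospec.
exact: eq_fset_divisors_double odd_m sD1 sD2 (cospectral_icg_double odd_m ts_m cospec).
Qed.
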